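(* Let $m\ge 1$ and let $M \subseteq \{1,2,\dots,m\}$ satisfy \[ |M\cap\{1,\dots,k\}| > \tfrac{k}{2} \quad\text{and}\quad |M\cap\{m-k+1,\dots,m\}| > \tfrac{k}{2} \] for every integer $0<k\le m$. Then $M+M=\{2,3,\dots,2m\}$.
   Context: For a finite set $S$ of integers, $S+S=\{s_1+s_2 : s_1,s_2\in S\}$. *)

From mathcomp Require Import all_boot.
Set Implicit Arguments. Unset Strict Implicit. Unset Printing Implicit Defensive.

Definition sumset (n : nat) (S : {set 'I_n}) : pred nat :=
  fun s => [exists x in S, exists y in S, (x : nat) + y == s].

From mathcomp Require Import all_boot.
From mathcomp Require Import zify.

Set Implicit Arguments.
Unset Strict Implicit.
Unset Printing Implicit Defensive.

(* An interval [a, b] holding more than half of its points in A contains two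
   points of A (possibly equal) summing to a + b: otherwise the reflection
   x |-> a + b - x would map A injectively into the complement of A in [a, b].
   For small s apply this to M below s - 1, for large s to M above
   m - (2m + 1 - s). *)

Lemma card_interval_le n a b : #|[set x : 'I_n | a <= x <= b]| <= b.+1 - a.
Proof.
rewrite cardE -(size_map val) -(size_iota a (b.+1 - a)).
have uniq_vals : uniq (map val (enum [set x : 'I_n | a <= x <= b])).
  by rewrite map_inj_uniq ?enum_uniq //; apply: val_inj.
apply: (uniq_leq_size uniq_vals) => y /mapP[x]; rewrite mem_enum inE => ax ->.
by rewrite mem_iota; move: ax; case: x => x /= _; lia.
Qed.

Lemma interval_pair_sum n (A : {set 'I_n.+1}) a b :
  {in A, forall x : 'I_n.+1, a <= x <= b} -> b <= n -> b.+1 - a < 2 * #|A| ->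
  exists x y, [/\ x \in A, y \in A & (x : nat) + y = a + b].
Proof.
move=> A_ab le_bn card_A.
pose refl (x : 'I_n.+1) : 'I_n.+1 := inord (a + b - x).
have reflE x : x \in A -> (refl x : nat) = a + b - x.
  by move=> /A_ab ax; rewrite /refl inordK //; lia.
case: (boolP [exists x in A, refl x \in A]) => [/exists_inP[x xA rxA]|].
  by exists x, (refl x); split; rewrite // reflE //; have := A_ab _ xA; lia.
rewrite negb_exists_in => /forall_inP reflA_out.
have reflA_disj : A :&: refl @: A = set0.
  apply/setP => z; rewrite !inE; apply/negbTE/andP => -[zA /imsetP[x xA ez]].
  by move: (reflA_out x xA); rewrite -ez zA.
have card_reflA : #|refl @: A| = #|A|.
  apply: card_in_imset => x y xA yA /(congr1 val); rewrite /= !reflE // => e.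
  by apply: val_inj => /=; have := A_ab _ xA; have := A_ab _ yA; lia.
have sub_ab : A :|: refl @: A \subset [set x : 'I_n.+1 | a <= x <= b].
  apply/subsetP => z; rewrite !inE => /orP[/A_ab //|/imsetP[x xA ->]].
  by rewrite reflE //; have := A_ab _ xA; lia.
have := leq_trans (subset_leq_card sub_ab) (card_interval_le _ a b).
by rewrite cardsU reflA_disj cards0 subn0 card_reflA; lia.
Qed.

Lemma sumsetP n (S : {set 'I_n}) s :
  reflect (exists x y, [/\ x \in S, y \in S & (x : nat) + y = s]) (s \in sumset S).
Proof.
rewrite unfold_in; apply: (iffP exists_inP) => [[x xS /exists_inP[y yS /eqP e]]|].
  by exists x, y.
by move=> [x [y [xS yS e]]]; exists x => //; apply/exists_inP; exists y; rewrite ?e.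
Qed.

Lemma sumset_interval_sum n (S A : {set 'I_n.+1}) a b :
  A \subset S -> {in A, forall x : 'I_n.+1, a <= x <= b} -> b <= n ->
  b.+1 - a < 2 * #|A| -> a + b \in sumset S.
Proof.
move=> /subsetP AS A_ab le_bn card_A; apply/sumsetP.
have [x [y [xA yA e]]] := interval_pair_sum A_ab le_bn card_A.
by exists x, y; split; auto.
Qed.

Theorem lemma1 (m : nat) (M : {set 'I_m.+1}) :
  1 <= m ->
  (forall x : 'I_m.+1, x \in M -> 1 <= x) ->
  (forall k : nat, 0 < k <= m ->
     k < 2 * #|[set x in M | (x : nat) <= k]| /\
     k < 2 * #|[set x in M | m - k + 1 <= x]|) ->
  forall s : nat, (s \in sumset M) = (2 <= s <= 2 * m).
Proof.
move=> m_gt0 M_gt0 M_dense s; apply/idP/idP.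
  case/sumsetP => x [y [xM yM <-]].
  by have := M_gt0 _ xM; have := M_gt0 _ yM; have := ltn_ord x; have := ltn_ord y; lia.
case/andP => s_ge2 s_le2m.
have sub_M (P : pred 'I_m.+1) : [set x in M | P x] \subset M.
  by rewrite setIdE subsetIl.
have [s_small | s_large] := leqP s m.+1.
  have [card_low _] := M_dense s.-1 ltac:(lia).
  rewrite (_ : s = 1 + s.-1); last by lia.
  apply: (sumset_interval_sum (sub_M (fun x => x <= s.-1))) => [x||].
  - by rewrite inE => /andP[/M_gt0 ? ?]; lia.
  - by lia.
  - by move: card_low; apply: leq_trans; lia.
have [_ card_high] := M_dense (2 * m + 1 - s) ltac:(lia).
rewrite (_ : s = (m - (2 * m + 1 - s) + 1) + m); last by lia.
apply: (sumset_interval_sum (sub_M (fun x => m - (2 * m + 1 - s) + 1 <= x))) => [x||].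
- by rewrite inE => /andP[_ ?]; have := ltn_ord x; lia.
- by [].
- by move: card_high; apply: leq_trans; lia.
Qed.
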